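(* Let $\Omega$ be a set, $n\ge1$, and let $H_1,\ldots,H_n,G$ be subgroups of $\mathrm{Sym}(\Omega)$ such that $(H_1,\ldots,H_n)$ is confined by $G$. Let $P$ be a confining subset for $(H_1,\ldots,H_n,G)$, let $r=|P|$, and assume that $\{\Omega_\sigma\}_{\sigma\in P}$ is a displacement configuration for $P$ such that for every $\sigma\in P$ the group $\mathrm{Rist}_G(\Omega_\sigma)$ is non-trivial and $\mathrm{FC}_{\leqslant nr}(\mathrm{Rist}_G(\Omega_\sigma))=\{1\}$. Then for every $\sigma\in P$ and $k\le n$ such that $D_{\sigma,k}$ has index at most $nr$ in $R$, there exists $\rho\in M_\sigma$ such that $H_k$ contains a non-trivial subgroup $N\le\mathrm{Rist}_G(\Omega_\rho)$ that is normalized by $D_{\sigma,k}$. Moreover, if $\mathrm{Rist}_G(\Omega_\rho)$ is finitely generated for all $\rho\in M_\sigma$, then one can find a finitely generated subgroup $L$ of $H_k$ that contains $N$.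
   Context: $\mathrm{Sym}(\Omega)$ is the group of permutations of $\Omega$. The $n$-tuple $(H_1,\ldots,H_n)$ is confined by $G$ if there is a finite set $P$ of non-trivial elements of $\mathrm{Sym}(\Omega)$ such that for every $g\in G$ there is $j$ with $gH_jg^{-1}\cap P\ne\varnothing$; $P$ is then a confining subset for $(H_1,\ldots,H_n,G)$. For $\Sigma\subset\Omega$, $\mathrm{Rist}_G(\Sigma)$ is the set of elements of $G$ fixing $\Omega\setminus\Sigma$ pointwise. $\mathrm{FC}_{\leqslant m}(K)$ denotes the set of elements of $K$ whose conjugacy class has at most $m$ elements. A collection $\{\Omega_\sigma\}_{\sigma\in P}$ of non-empty subsets of $\Omega$ is a displacement configuration for $P$ if: (C1) for all $\sigma,\rho\in P$, $\Omega_\sigma=\Omega_\rho$ or $\Omega_\sigma\cap\Omega_\rho=\varnothing$; (C3) for all $\sigma,\rho\in P$, either $\sigma$ fixes $\Omega_\rho$ pointwise or $\sigma(\Omega_\rho)\cap\bigcup_{\alpha\in P}\Omega_\alpha=\varnothing$; (C4) for all $\sigma\in P$, $\sigma(\Omega_\sigma)$ is disjoint from $\bigcup_{\alpha\in P}\Omega_\alpha$ and from $\bigcup_{\alpha\in P}\sigma^{-1}(\Omega_\alpha)$. Notation: $R$ is the subgroup of $G$ generated by the groups $\mathrm{Rist}_G(\Omega_\sigma)$, $\sigma\in P$. For $\sigma\in P$ and $k\le n$, $Y_{\sigma,k}=\{\gamma\in R:\gamma\sigma\gamma^{-1}\in H_k\}$ and $D_{\sigma,k}=\langle\gamma\delta^{-1}:\gamma,\delta\in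 Y_{\sigma,k}\rangle$. For $\sigma\in P$, $M_\sigma$ is the set of $\rho\in P$ such that $\sigma(\Omega_\rho)$ is disjoint from $\Omega_\alpha$ for all $\alpha\in P$. *)

(* Permutations of a set Omega (a Type) are represented as
   functions Omega -> Omega; subgroups of Sym(Omega) as predicates on such
   functions whose members are bijections (see [is_subgroup]).
   Equality of permutations is pointwise. *)
From Stdlib Require Import List Arith.
Import ListNotations.
Set Implicit Arguments.
Unset Strict Implicit.

Section Defs.
Variable Omega : Type.
Definition perm_t := Omega -> Omega.
Definition pset := perm_t -> Prop.

Definition is_id (f : perm_t) : Prop := forall x, f x = x.

Definition inverse_of (f g : perm_t) : Prop :=
  (forall x, g (f x) = x) /\ (forall x, f (g x) = x).

Definition bijective_perm (f : perm_t) : Prop := exists g, inverse_of f g.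

Definition nontrivial_perm (f : perm_t) : Prop := bijective_perm f /\ ~ is_id f.

Definition is_subgroup (K : pset) : Prop :=
  (forall f, K f -> bijective_perm f) /\
  K (fun x => x) /\
  (forall f g, K f -> K g -> K (fun x => f (g x))) /\
  (forall f g, K f -> inverse_of f g -> K g).

Definition subset (A B : pset) : Prop := forall f, A f -> B f.

Definition gen (S : pset) : pset :=
  fun f => forall K, is_subgroup K -> subset S K -> K f.

Definition nontrivial_group (K : pset) : Prop := exists f, K f /\ ~ is_id f.

(* x is conjugated by g to y, i.e. g x g^{-1} = y  (pointwise: g o x = y o g) *)
Definition conj_to (g x y : perm_t) : Prop := forall z, g (x z) = y (g z).

Definition confining_subset (n : nat) (H : nat -> pset) (G : pset)
  (P : list perm_t) : Prop :=
  (forall p, In p P -> nontrivial_perm p) /\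
  forall g, G g -> exists j, 1 <= j <= n /\
    exists h, H j h /\ exists p, In p P /\ conj_to g h p.

Definition confined (n : nat) (H : nat -> pset) (G : pset) : Prop :=
  exists P : list perm_t, confining_subset n H G P.

Definition Rist (G : pset) (Sigma : Omega -> Prop) : pset :=
  fun g => G g /\ forall x, ~ Sigma x -> g x = x.

Definition union_conf (P : list perm_t) (Om : perm_t -> Omega -> Prop)
  : Omega -> Prop := fun x => exists a, In a P /\ Om a x.

(* displacement configuration, conditions (C1), (C3), (C4), sets non-empty *)
Definition displacement_configuration (P : list perm_t)
  (Om : perm_t -> Omega -> Prop) : Prop :=
  (forall s, In s P -> exists x, Om s x) /\
  (forall s r, In s P -> In r P ->
     (forall x, Om s x <-> Om r x) \/ (forall x, ~ (Om s x /\ Om r x))) /\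
  (forall s r, In s P -> In r P ->
     (forall x, Om r x -> s x = x) \/
     (forall x, Om r x -> ~ union_conf P Om (s x))) /\
  (forall s, In s P ->
     (forall x, Om s x -> ~ union_conf P Om (s x)) /\
     (forall x, Om s x -> forall a, In a P -> ~ Om a (s (s x)))).

(* FC_{<= m}(K) = {1}: every element of K whose K-conjugacy class has at most
   m elements is the identity *)
Definition conj_class_le (K : pset) (m : nat) (x : perm_t) : Prop :=
  exists s : list perm_t, length s <= m /\
    forall k, K k -> exists y, In y s /\ conj_to k x y.

Definition FC_trivial (K : pset) (m : nat) : Prop :=
  forall x, K x -> conj_class_le K m x -> is_id x.

Definition R_gen (G : pset) (P : list perm_t) (Om : perm_t -> Omega -> Prop)
  : pset := gen (fun f => exists s, In s P /\ Rist G (Om s) f).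

Definition Yset (G : pset) (P : list perm_t) (Om : perm_t -> Omega -> Prop)
  (H : nat -> pset) (s : perm_t) (k : nat) : pset :=
  fun c => R_gen G P Om c /\ exists h, H k h /\ conj_to c s h.

(* D_{sigma,k} = < c d^{-1} : c, d in Y_{sigma,k} > *)
Definition Dset (G : pset) (P : list perm_t) (Om : perm_t -> Omega -> Prop)
  (H : nat -> pset) (s : perm_t) (k : nat) : pset :=
  gen (fun f => exists c d, Yset G P Om H s k c /\ Yset G P Om H s k d /\
                  forall z, f (d z) = c z).

Definition index_le (D K : pset) (m : nat) : Prop :=
  exists s : list perm_t, length s <= m /\ (forall g, In g s -> K g) /\
    forall x, K x -> exists g, In g s /\ exists d, D d /\ forall z, x z = g (d z).

Definition Mset (P : list perm_t) (Om : perm_t -> Omega -> Prop) (s : perm_t)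
  : perm_t -> Prop :=
  fun r => In r P /\ forall a, In a P -> forall x, Om r x -> ~ Om a (s x).

Definition normalized_by (N D : pset) : Prop :=
  forall d x, D d -> N x -> exists y, N y /\ conj_to d x y.

Definition fin_gen (K : pset) : Prop :=
  exists s : list perm_t, forall f, K f <-> gen (fun g => In g s) f.

End Defs.

From Stdlib Require Import List Arith Lia Classical ClassicalEpsilon FunctionalExtensionality.
Import ListNotations.

(* Let U be the union of the sets Om a (a in P) and U_M the union of the Om r for r in M_s.
   By (C3) and (C4), s and s^-1 map U_M outside U while s fixes U \ U_M pointwise.  Hence
   for c in R the conjugate c s c^-1 only depends on the restriction C of c to U_M, and for
   c, d in Y_{s,k} the element (c s c^-1) (d s d^-1)^-1 of H_k factors as x (s y s^-1) with
   x = C D^-1 and y = C^-1 D both supported in U_M.  Such "good pairs" (x, y) form a group,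
   which receives D_{s,k} restricted to U_M in its first coordinate and conjugates of D_{s,k}
   in its second.  As D_{s,k} has index at most m = n |P| in R, each Rist_G(Om r) is covered by m
   cosets of each coordinate, so by the FC hypothesis a non-trivial element of Rist_G(Om r)
   fails to commute with some second coordinate.  Commutators of two elements of H_k of the
   form x (s y s^-1), conjugated by c s c^-1, then produce a non-trivial n0 in H_k with
   support in a single Om r, r in M_s.  Every d in D_{s,k} acts on Om r like an element
   x (s y s^-1) of H_k, so the normal closure of n0 under D_{s,k} stays in H_k.  If
   Rist_G(Om r) is finitely generated, Schreier's lemma makes the restriction of D_{s,k} to
   Om r finitely generated, and finitely many elements x (s y s^-1) together with n0
   generate the required L. *)

Section Permutations.
Context {Omega : Type}.
Notation perm := (perm_t Omega).
Notation ps := (pset Omega).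
Implicit Types (f g h l : perm) (V W : Omega -> Prop) (A B D K S : ps).

(* Junk value: for a non-bijective [f], [inv f] is an arbitrary function. *)
Definition inv f : perm := epsilon (inhabits (fun x : Omega => x)) (inverse_of f).

Lemma inv_spec f : bijective_perm f -> inverse_of f (inv f).
Proof. intros [g Hg]. unfold inv. apply epsilon_spec. exists g. exact Hg. Qed.

Lemma permK f : bijective_perm f -> forall x, inv f (f x) = x.
Proof. intros Hf. apply (inv_spec f Hf). Qed.

Lemma permKV f : bijective_perm f -> forall x, f (inv f x) = x.
Proof. intros Hf. apply (inv_spec f Hf). Qed.

Lemma perm_inj f : bijective_perm f -> forall x y, f x = f y -> x = y.
Proof. intros Hf x y E. rewrite <- (permK f Hf x), <- (permK f Hf y), E. reflexivity. Qed.

Lemma inv_unique f g : inverse_of f g -> inv f = g.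
Proof.
  intros Hfg. assert (Hf : bijective_perm f) by (exists g; exact Hfg).
  apply functional_extensionality; intro x. apply (perm_inj f Hf).
  rewrite (permKV f Hf). symmetry. apply Hfg.
Qed.

Lemma bij_inv f : bijective_perm f -> bijective_perm (inv f).
Proof. intros Hf. exists f. split; intro x; [apply permKV | apply permK]; exact Hf. Qed.

Lemma invK f : bijective_perm f -> inv (inv f) = f.
Proof. intros Hf. apply inv_unique. split; intro x; [apply permKV | apply permK]; exact Hf. Qed.

Lemma bij_id : bijective_perm (fun x : Omega => x).
Proof. exists (fun x => x). split; reflexivity. Qed.

Lemma inv_id : inv (fun x : Omega => x) = (fun x => x).
Proof. apply inv_unique. split; reflexivity. Qed.

Lemma bij_comp f g : bijective_perm f -> bijective_perm g -> bijective_perm (fun x => f (g x)).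
Proof.
  intros Hf Hg. exists (fun x => inv g (inv f x)).
  split; intro x; rewrite ?permK, ?permKV by assumption; reflexivity.
Qed.

Lemma inv_comp f g : bijective_perm f -> bijective_perm g ->
  inv (fun x => f (g x)) = (fun x => inv g (inv f x)).
Proof.
  intros Hf Hg. apply inv_unique.
  split; intro x; rewrite ?permK, ?permKV by assumption; reflexivity.
Qed.

(** * Subgroups *)

Lemma subgroup_bij K f : is_subgroup K -> K f -> bijective_perm f.
Proof. intros [HK _]. apply HK. Qed.

Lemma subgroup_id K : is_subgroup K -> K (fun x => x).
Proof. intros [_ [HK _]]. exact HK. Qed.

Lemma subgroup_comp K f g : is_subgroup K -> K f -> K g -> K (fun x => f (g x)).
Proof. intros [_ [_ [HK _]]]. apply HK. Qed.

Lemma subgroup_inverse K f g : is_subgroup K -> K f -> inverse_of f g -> K g.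
Proof. intros [_ [_ [_ HK]]]. apply HK. Qed.

Lemma subgroup_inv K f : is_subgroup K -> K f -> K (inv f).
Proof.
  intros HK Hf. apply (subgroup_inverse K f); auto.
  apply inv_spec. apply (subgroup_bij K); auto.
Qed.

Lemma subgroup_intro K :
  (forall f, K f -> bijective_perm f) -> K (fun x => x) ->
  (forall f g, K f -> K g -> K (fun x => f (g x))) ->
  (forall f, K f -> K (inv f)) -> is_subgroup K.
Proof.
  intros Hb Hid Hcomp Hinv. split; [|split; [|split]]; auto.
  intros f g Hf Hfg. rewrite <- (inv_unique f g Hfg). auto.
Qed.

Lemma subgroupI A B : is_subgroup A -> is_subgroup B -> is_subgroup (fun f => A f /\ B f).
Proof.
  intros HA HB. apply subgroup_intro.
  - intros f [Hf _]. exact (subgroup_bij A f HA Hf).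
  - split; apply subgroup_id; auto.
  - intros f g [] []. split; apply subgroup_comp; auto.
  - intros f []. split; apply subgroup_inv; auto.
Qed.

Lemma gen_incl S f : S f -> gen S f.
Proof. intros Hf K _ HS. apply HS, Hf. Qed.

Lemma gen_min S K : is_subgroup K -> subset S K -> subset (gen S) K.
Proof. intros HK HS f Hf. apply Hf; auto. Qed.

Lemma gen_subgroup S : (forall f, S f -> bijective_perm f) -> is_subgroup (gen S).
Proof.
  intros HS. split; [|split; [|split]].
  - intros f Hf. apply (Hf (@bijective_perm Omega)); [|exact HS].
    split; [|split; [|split]].
    + auto.
    + exact bij_id.
    + intros; apply bij_comp; auto.
    + intros g h _ [Hgh Hhg]. exists g. split; assumption.
  - intros K HK _. apply subgroup_id; auto.
  - intros f g Hf Hg K HK HSK. apply subgroup_comp; [exact HK | apply Hf | apply Hg]; assumption.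
  - intros f g Hf Hfg K HK HSK.
    apply (subgroup_inverse K f); [exact HK | apply Hf; assumption | exact Hfg].
Qed.

(** * Supports, restrictions and conjugation *)

Definition supp_in f V := forall x, ~ V x -> f x = x.
Definition preserves f V := forall x, V (f x) <-> V x.

Lemma supp_preserves f V : bijective_perm f -> supp_in f V -> preserves f V.
Proof.
  intros Hf Hs x. split; intro Hx.
  - apply NNPP. intro Hn. rewrite Hs in Hx; auto.
  - apply NNPP. intro Hn. apply Hn. enough (E : f x = x) by (rewrite E; exact Hx).
    apply (perm_inj f Hf). apply Hs, Hn.
Qed.

Lemma supp_inv f V : bijective_perm f -> supp_in f V -> supp_in (inv f) V.
Proof. intros Hf Hs x Hx. rewrite <- (Hs x Hx) at 1. apply permK, Hf. Qed.

Lemma supp_comp f g V : supp_in f V -> supp_in g V -> supp_in (fun x => f (g x)) V.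
Proof. intros Hf Hg x Hx. rewrite Hg, Hf; auto. Qed.

Lemma supp_mono f V W : supp_in f V -> (forall x, V x -> W x) -> supp_in f W.
Proof. intros Hf HVW x Hx. apply Hf. intro; apply Hx; auto. Qed.

Lemma preserves_inv f V : bijective_perm f -> preserves f V -> preserves (inv f) V.
Proof. intros Hf Hp x. pose proof (Hp (inv f x)) as E. rewrite permKV in E by exact Hf. tauto. Qed.

Lemma preserves_comp f g V : preserves f V -> preserves g V -> preserves (fun x => f (g x)) V.
Proof. intros Hf Hg x. pose proof (Hf (g x)). pose proof (Hg x). tauto. Qed.

Lemma preserves_disj f V W : bijective_perm f -> supp_in f V ->
  (forall x, V x -> W x -> False) -> preserves f W.
Proof.
  intros Hf Hs Hd x. destruct (classic (V x)) as [Hv|Hv].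
  - assert (V (f x)) by (apply supp_preserves; auto). split; intro; exfalso; eauto.
  - rewrite Hs by exact Hv. tauto.
Qed.

Lemma preserves_sub f V W : bijective_perm f -> supp_in f V ->
  (forall x, V x -> W x) -> preserves f W.
Proof.
  intros Hf Hs Hsub x. destruct (classic (V x)) as [Hv|Hv].
  - assert (V (f x)) by (apply supp_preserves; auto). split; auto.
  - rewrite Hs by exact Hv. tauto.
Qed.

Lemma preserving_subgroup V : is_subgroup (fun l => bijective_perm l /\ preserves l V).
Proof.
  apply subgroup_intro.
  - intros f []; auto.
  - split; [exact bij_id | intro; tauto].
  - intros f g [] []. split; [apply bij_comp | apply preserves_comp]; auto.
  - intros f []. split; [apply bij_inv | apply preserves_inv]; auto.
Qed.

Lemma commute_disj f g V W : bijective_perm f -> bijective_perm g ->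
  supp_in f V -> supp_in g W -> (forall x, V x -> W x -> False) ->
  forall x, f (g x) = g (f x).
Proof.
  intros Hf Hg Hsf Hsg Hd x.
  destruct (classic (V x)) as [Hv|Hv].
  - assert (V (f x)) by (apply supp_preserves; auto).
    rewrite (Hsg x), (Hsg (f x)); auto; intro; eauto.
  - rewrite (Hsf x Hv). destruct (classic (W x)) as [Hw|Hw].
    + assert (W (g x)) by (apply supp_preserves; auto).
      apply Hsf. intro; eauto.
    + rewrite (Hsg x Hw). apply Hsf, Hv.
Qed.

Lemma commute_fix f g W : bijective_perm f -> bijective_perm g -> supp_in f W ->
  (forall x, W x -> g x = x) -> forall x, f (g x) = g (f x).
Proof.
  intros Hf Hg Sf Fix x. destruct (classic (W x)) as [Hx|Hx].
  - assert (W (f x)) by (apply supp_preserves; auto). rewrite !Fix; auto.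
  - assert (~ W (g x)).
    { intro Hgx. apply Hx. rewrite <- (perm_inj g Hg _ _ (Fix _ Hgx)). exact Hgx. }
    rewrite !Sf; auto.
Qed.

Lemma commute_inv f g : bijective_perm g -> (forall x, f (g x) = g (f x)) ->
  forall x, f (inv g x) = inv g (f x).
Proof. intros Hg C x. apply (perm_inj g Hg). rewrite <- C, !permKV; auto. Qed.

Definition restr V f : perm :=
  fun x => if excluded_middle_informative (V x) then f x else x.

Lemma restr_in V f x : V x -> restr V f x = f x.
Proof. intros H. unfold restr. destruct excluded_middle_informative; tauto. Qed.

Lemma restr_out V f x : ~ V x -> restr V f x = x.
Proof. intros H. unfold restr. destruct excluded_middle_informative; tauto. Qed.

Lemma restr_supp V f : supp_in (restr V f) V.
Proof. intros x. apply restr_out. Qed.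

Lemma restr_self V f : supp_in f V -> restr V f = f.
Proof.
  intros H. apply functional_extensionality; intro x. destruct (classic (V x)).
  - apply restr_in; auto.
  - rewrite restr_out, H; auto.
Qed.

Lemma restr_id V : restr V (fun x => x) = (fun x => x).
Proof. apply restr_self. intros x _. reflexivity. Qed.

Lemma restr_comp V f g : preserves g V ->
  restr V (fun x => f (g x)) = (fun x => restr V f (restr V g x)).
Proof.
  intros Hg. apply functional_extensionality; intro x. destruct (classic (V x)) as [Hv|Hv].
  - assert (V (g x)) by (apply Hg; exact Hv).
    rewrite (restr_in V g x Hv), !restr_in by assumption. reflexivity.
  - assert (~ V (g x)) by (rewrite (Hg x); exact Hv).
    rewrite (restr_out V g x Hv), !restr_out by assumption. reflexivity.
Qed.

Lemma restr_inverse V f : bijective_perm f -> preserves f V ->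
  inverse_of (restr V f) (restr V (inv f)).
Proof.
  intros Hf Hp. pose proof (preserves_inv f V Hf Hp) as Hq.
  split; intro x; destruct (classic (V x)) as [Hv|Hv].
  - rewrite (restr_in V f x Hv), restr_in by (apply Hp, Hv). apply permK, Hf.
  - rewrite !(restr_out V _ x Hv). reflexivity.
  - rewrite (restr_in V _ x Hv), restr_in by (apply Hq, Hv). apply permKV, Hf.
  - rewrite !(restr_out V _ x Hv). reflexivity.
Qed.

Lemma restr_bij V f : bijective_perm f -> preserves f V -> bijective_perm (restr V f).
Proof. intros Hf Hp. exists (restr V (inv f)). apply restr_inverse; auto. Qed.

Lemma restr_inv V f : bijective_perm f -> preserves f V -> inv (restr V f) = restr V (inv f).
Proof. intros Hf Hp. apply inv_unique, restr_inverse; auto. Qed.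

Lemma restr_restr V W f : (forall x, V x -> W x) -> restr V (restr W f) = restr V f.
Proof.
  intros HVW. apply functional_extensionality; intro x. destruct (classic (V x)) as [Hx|Hx].
  - rewrite !restr_in; auto.
  - rewrite !restr_out; auto.
Qed.

Lemma restr_split V f : preserves f V -> f = (fun x => restr V f (restr (fun z => ~ V z) f x)).
Proof.
  intros Pf. apply functional_extensionality; intro x. destruct (classic (V x)) as [Hx|Hx].
  - rewrite (restr_out (fun z => ~ V z) f x) by tauto. rewrite restr_in; auto.
  - assert (~ V (f x)) by (rewrite (Pf x); exact Hx).
    rewrite (restr_in (fun z => ~ V z) f x Hx), restr_out; auto.
Qed.

Lemma restr_image_subgroup V K : is_subgroup K -> (forall l, K l -> preserves l V) ->
  is_subgroup (fun f => exists l, K l /\ f = restr V l).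
Proof.
  intros HK HV. apply subgroup_intro.
  - intros f [l [Hl ->]]. apply restr_bij; auto. apply (subgroup_bij K); auto.
  - exists (fun x => x). split; [apply subgroup_id; auto | symmetry; apply restr_id].
  - intros f g [a [Ha ->]] [b [Hb ->]]. exists (fun x => a (b x)).
    split; [apply subgroup_comp; auto | symmetry; apply restr_comp; auto].
  - intros f [a [Ha ->]]. exists (inv a). split; [apply subgroup_inv; auto|].
    apply restr_inv; auto. apply (subgroup_bij K); auto.
Qed.

Lemma subgroup_preimage A K (phi : perm -> perm) :
  is_subgroup A -> is_subgroup K -> phi (fun x => x) = (fun x => x) ->
  (forall a b, A a -> A b -> phi (fun x => a (b x)) = (fun x => phi a (phi b x))) ->
  (forall a, A a -> phi (inv a) = inv (phi a)) ->
  is_subgroup (fun a => A a /\ K (phi a)).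
Proof.
  intros HA HK Hid Hcomp Hinv. apply subgroup_intro.
  - intros f [Hf _]. apply (subgroup_bij A); auto.
  - rewrite Hid. split; apply subgroup_id; auto.
  - intros a b [Ha Ka] [Hb Kb]. rewrite Hcomp by assumption.
    split; apply subgroup_comp; auto.
  - intros a [Ha Ka]. rewrite Hinv by assumption. split; apply subgroup_inv; auto.
Qed.

Lemma Rist_subgroup G V : is_subgroup G -> is_subgroup (Rist G V).
Proof.
  intros HG. apply subgroup_intro.
  - intros f [Gf _]. apply (subgroup_bij G); auto.
  - split; [apply subgroup_id; auto | reflexivity].
  - intros f g [Gf Sf] [Gg Sg]. split; [apply subgroup_comp; auto | apply supp_comp; auto].
  - intros f [Gf Sf]. split; [apply subgroup_inv; auto|].
    apply supp_inv; [apply (subgroup_bij G); auto | exact Sf].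
Qed.

Definition conjp l f : perm := fun x => l (f (inv l x)).
Definition commp a b : perm := fun x => a (b (inv a (inv b x))).

Lemma conj_to_conjp l f : bijective_perm l -> conj_to l f (conjp l f).
Proof. intros Hl x. unfold conjp. rewrite permK by exact Hl. reflexivity. Qed.

Lemma bij_conjp l f : bijective_perm l -> bijective_perm f -> bijective_perm (conjp l f).
Proof. intros. unfold conjp. apply bij_comp; [|apply bij_comp; [|apply bij_inv]]; auto. Qed.

Lemma conjp_id l : bijective_perm l -> conjp l (fun x => x) = (fun x => x).
Proof. intros Hl. apply functional_extensionality; intro x. apply permKV, Hl. Qed.

Lemma conjp_comp l a b : bijective_perm l ->
  conjp l (fun x => a (b x)) = (fun x => conjp l a (conjp l b x)).
Proof.
  intros Hl. apply functional_extensionality; intro x. unfold conjp. rewrite permK by exact Hl.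
  reflexivity.
Qed.

Lemma conjp_inv l a : bijective_perm l -> bijective_perm a -> conjp l (inv a) = inv (conjp l a).
Proof.
  intros Hl Ha. symmetry. apply inv_unique. unfold conjp.
  split; intro x; rewrite ?permK, ?permKV by assumption; reflexivity.
Qed.

Lemma conjpM l l' f : bijective_perm l -> bijective_perm l' ->
  conjp (fun x => l (l' x)) f = conjp l (conjp l' f).
Proof. intros Hl Hl'. unfold conjp. rewrite inv_comp by assumption. reflexivity. Qed.

Lemma supp_conjp l f V : bijective_perm l -> supp_in f V ->
  supp_in (conjp l f) (fun x => V (inv l x)).
Proof. intros Hl Hf x Hx. unfold conjp. rewrite Hf by exact Hx. apply permKV, Hl. Qed.

Lemma conjpK l f : bijective_perm l -> conjp (inv l) (conjp l f) = f.
Proof.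
  intros Hl. apply functional_extensionality; intro x. unfold conjp.
  rewrite invK, !permK by exact Hl. reflexivity.
Qed.

Lemma commute_conjp l a b : bijective_perm l -> (forall x, a (conjp l b x) = conjp l b (a x)) ->
  forall x, inv l (a (l (b x))) = b (inv l (a (l x))).
Proof.
  intros Hl C x. specialize (C (l x)). unfold conjp in C. rewrite permK in C by exact Hl.
  rewrite C, permK by exact Hl. reflexivity.
Qed.

Lemma conjp_subgroup_preimage K l : is_subgroup K -> bijective_perm l ->
  is_subgroup (fun f => K f /\ K (conjp l f)).
Proof.
  intros HK Hl. apply (subgroup_preimage K K); auto.
  - apply conjp_id, Hl.
  - intros a b _ _. apply conjp_comp, Hl.
  - intros a Ha. apply conjp_inv; auto. apply (subgroup_bij K); auto.
Qed.

Lemma conjp_restr l f V : bijective_perm l -> preserves l V -> supp_in f V -> bijective_perm f ->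
  conjp l f = conjp (restr V l) f.
Proof.
  intros Hl Pl Sf Hf. unfold conjp. rewrite restr_inv by assumption.
  apply functional_extensionality; intro x.
  pose proof (preserves_inv l V Hl Pl x) as Plx.
  destruct (classic (V x)) as [Hx|Hx].
  - assert (V (inv l x)) by tauto. assert (V (f (inv l x))) by (apply supp_preserves; auto).
    rewrite (restr_in V (inv l) x Hx), restr_in by assumption. reflexivity.
  - assert (~ V (inv l x)) by tauto.
    rewrite (restr_out V (inv l) x Hx), (Sf x Hx), restr_out, Sf by assumption. apply permKV, Hl.
Qed.

Lemma commp_id_commute a b : bijective_perm a -> bijective_perm b -> is_id (commp a b) ->
  forall x, a (b x) = b (a x).
Proof.
  intros Ha Hb Hid x. specialize (Hid (b (a x))). unfold commp in Hid.
  rewrite (permK b Hb), (permK a Ha) in Hid. exact Hid.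
Qed.

Lemma restr_commute V f y : bijective_perm y -> supp_in y V -> preserves f V ->
  (forall x, f (y x) = y (f x)) -> forall x, restr V f (y x) = y (restr V f x).
Proof.
  intros Hy Sy Pf C x. destruct (classic (V x)) as [Hx|Hx].
  - assert (V (y x)) by (apply supp_preserves; auto).
    rewrite !restr_in by assumption. apply C.
  - rewrite (Sy x Hx), restr_out by exact Hx. symmetry. apply Sy, Hx.
Qed.

Lemma commp_reduce a1 a2 b1 b2 :
  bijective_perm a1 -> bijective_perm a2 -> bijective_perm b1 -> bijective_perm b2 ->
  (forall x, a2 (b1 x) = b1 (a2 x)) -> (forall x, a2 (b2 x) = b2 (a2 x)) ->
  (forall x, b1 (a1 x) = a1 (b1 x)) -> (forall x, b1 (b2 x) = b2 (b1 x)) ->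
  commp (fun x => a1 (a2 x)) (fun x => b1 (b2 x)) = commp a1 b2.
Proof.
  intros Ha1 Ha2 Hb1 Hb2 C21 C22 C11 C12. unfold commp.
  rewrite (inv_comp a1 a2), (inv_comp b1 b2) by assumption.
  apply functional_extensionality; intro x.
  rewrite C21, C22, (permKV a2 Ha2), C12, (commute_inv b1 a1 Ha1 C11),
    (commute_inv b1 b2 Hb2 C12), (permKV b1 Hb1).
  reflexivity.
Qed.

Lemma Rist_conjp G V l y : is_subgroup G -> G l -> preserves l V -> Rist G V y ->
  Rist G V (conjp l y).
Proof.
  intros HG Gl Pl [Gy Sy]. assert (Hl : bijective_perm l) by (apply (subgroup_bij G); auto).
  split.
  - unfold conjp. apply subgroup_comp; [|auto|apply subgroup_comp; [|auto|apply subgroup_inv]]; auto.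
  - intros x Hx. apply (supp_conjp l y V Hl Sy).
    rewrite (preserves_inv l V Hl Pl x). exact Hx.
Qed.

Lemma Rist_commp G V a b : is_subgroup G -> G a -> preserves a V -> Rist G V b ->
  Rist G V (commp a b).
Proof.
  intros HG Ga Pa Hb. change (Rist G V (fun x => conjp a b (inv b x))).
  apply subgroup_comp; [apply Rist_subgroup; auto | apply Rist_conjp; auto |].
  apply subgroup_inv; [apply Rist_subgroup|]; auto.
Qed.

Lemma subgroup_conjp K l f : is_subgroup K -> K l -> K f -> K (conjp l f).
Proof.
  intros HK Hl Hf. unfold conjp.
  apply (subgroup_comp K l); [exact HK | exact Hl |].
  apply (subgroup_comp K f); [exact HK | exact Hf | apply subgroup_inv; assumption].
Qed.

Lemma commp_subgroup K a b : is_subgroup K -> K a -> K b -> K (commp a b).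
Proof.
  intros HK Ha Hb. unfold commp.
  apply subgroup_comp; [|auto|apply subgroup_comp; [|auto|apply subgroup_comp]]; auto;
    apply subgroup_inv; auto.
Qed.

(** * Coset coverings and Schreier's lemma *)

Definition covered_by A B (m : nat) : Prop :=
  exists ts : list perm, length ts <= m /\ (forall t, In t ts -> A t) /\
    forall a, A a -> exists t, In t ts /\ exists b, B b /\ a = (fun x => t (b x)).

Lemma covered_by_weaken A B B' m : (forall b, B b -> B' b) -> covered_by A B m -> covered_by A B' m.
Proof.
  intros HB [ts [Hl [Hts Hc]]]. exists ts. split; [exact Hl|]. split; [exact Hts|].
  intros a Ha. destruct (Hc a Ha) as [t [Ht [b [Hb E]]]].
  exists t. split; [exact Ht|]. exists b. auto.
Qed.

Lemma covered_by_intersect A S (hs : list perm) m :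
  is_subgroup A -> is_subgroup S -> length hs <= m ->
  (forall a, A a -> exists h, In h hs /\ exists b, S b /\ a = (fun x => h (b x))) ->
  covered_by A (fun b => S b /\ A b) m.
Proof.
  intros HA HS Hm Hcov.
  enough (Gen : forall hs, exists ts, length ts <= length hs /\ (forall t, In t ts -> A t) /\
    forall a, A a -> (exists h, In h hs /\ exists b, S b /\ a = (fun x => h (b x))) ->
      exists t, In t ts /\ exists b, (S b /\ A b) /\ a = (fun x => t (b x))).
  { destruct (Gen hs) as [ts [L [Hts Hc]]]. exists ts. split; [lia|]. auto. }
  clear hs Hm Hcov. induction hs as [|h hs IH].
  - exists []. simpl. split; [lia|split]; [tauto|]. intros a _ [h [[] _]].
  - destruct IH as [ts [L [Hts Hc]]].
    destruct (classic (exists a0, A a0 /\ exists b0, S b0 /\ a0 = (fun x => h (b0 x))))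
      as [[a0 [Ha0 [b0 [Hb0 E0]]]]|Hno].
    + exists (a0 :: ts). simpl. split; [lia|split]; [intros t [<-|]; auto|].
      intros a Ha [h' [[<-|Hin] [b [Hb E]]]].
      2: { destruct (Hc a Ha) as [t [Ht R]]; [exists h'; eauto|].
           exists t. split; [right|]; assumption. }
      assert (Ba0 : bijective_perm a0) by (apply (subgroup_bij A); auto).
      assert (Bb0 : bijective_perm b0) by (apply (subgroup_bij S); auto).
      exists a0. split; [left; reflexivity|]. exists (fun x => inv a0 (a x)).
      split; [split|].
      * replace (fun x => inv a0 (a x)) with (fun x => inv b0 (b x)).
        { apply subgroup_comp; auto. apply subgroup_inv; auto. }
        apply functional_extensionality; intro x. apply (perm_inj a0 Ba0).
        rewrite permKV, E0, permKV, E by assumption. reflexivity.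
      * apply subgroup_comp; auto. apply subgroup_inv; auto.
      * apply functional_extensionality; intro x. rewrite permKV; auto.
    + exists ts. simpl. split; [lia|split; auto].
      intros a Ha [h' [[<-|Hin] [b [Hb E]]]]; [exfalso; apply Hno; exists a; eauto|].
      apply Hc; [exact Ha|]. exists h'. eauto.
Qed.

Lemma FC_trivial_centralizer A B m y : is_subgroup A -> covered_by A B m -> FC_trivial A m ->
  A y -> (forall b, B b -> forall x, y (b x) = b (y x)) -> is_id y.
Proof.
  intros HA [ts [Hl [Hts Hc]]] HFC Hy Hcomm. apply HFC; auto.
  exists (map (fun t => conjp t y) ts). split; [rewrite length_map; exact Hl|].
  intros a Ha. destruct (Hc a Ha) as [t [Ht [b [Hb ->]]]].
  exists (conjp t y). split; [apply (in_map (fun t => conjp t y)); exact Ht|].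
  intro x. unfold conjp. rewrite permK by (apply (subgroup_bij A); auto).
  rewrite Hcomm by exact Hb. reflexivity.
Qed.

Lemma list_choice {X Y : Type} (l : list X) (Pr : X -> Y -> Prop) (C : Y -> Prop) :
  (forall x, In x l -> exists y, C y /\ Pr x y) ->
  exists F, (forall y, In y F -> C y) /\ forall x, In x l -> exists y, In y F /\ Pr x y.
Proof.
  induction l as [|x l IH]; intros Hl.
  - exists []. simpl. tauto.
  - destruct IH as [F [HF1 HF2]]; [intros; apply Hl; simpl; auto|].
    destruct (Hl x) as [y [Cy Py]]; [simpl; auto|].
    exists (y :: F). simpl. split; [intros y' [<-|]; auto|].
    intros x' [<-|Hin]; [eauto|]. destruct (HF2 x' Hin) as [y' []]; eauto.
Qed.

Section Schreier.
Variables (A K Gk : ps) (gs ts : list perm).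
Hypotheses (HA : is_subgroup A) (HK : is_subgroup K) (HKA : subset K A)
  (HGk : is_subgroup Gk) (HGkK : subset Gk K)
  (HAgen : forall f, A f <-> gen (fun g => In g gs) f) (Hts : forall t, In t ts -> A t)
  (Hcov : forall a, A a -> exists t, In t ts /\ exists b, K b /\ a = (fun x => t (b x))).

Definition permutes_cosets a := forall t, In t ts -> exists t', In t' ts /\ exists f, Gk f /\
  (fun x => a (t x)) = (fun x => t' (f x)).

Lemma schreier_permutes :
  (forall g, In g (gs ++ map inv gs) -> permutes_cosets g) -> forall a, A a -> permutes_cosets a.
Proof.
  intros Hgs.
  assert (Hcomp : forall a b, permutes_cosets a -> permutes_cosets b ->
    permutes_cosets (fun x => a (b x))).
  { intros a b Ma Mb t Ht. destruct (Mb t Ht) as [t1 [Ht1 [f1 [Hf1 E1]]]].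
    destruct (Ma t1 Ht1) as [t2 [Ht2 [f2 [Hf2 E2]]]].
    exists t2. split; [exact Ht2|]. exists (fun x => f2 (f1 x)).
    split; [apply subgroup_comp; auto|].
    apply functional_extensionality; intro x.
    rewrite (equal_f E1 x). exact (equal_f E2 (f1 x)). }
  set (W := fun a => A a /\ permutes_cosets a /\ permutes_cosets (inv a)).
  assert (HW : is_subgroup W).
  { assert (Mid : permutes_cosets (fun x => x)).
    { intros t Ht. exists t. split; [exact Ht|].
      exists (fun x => x). split; [apply subgroup_id; auto | reflexivity]. }
    apply subgroup_intro.
    - intros f [Hf _]. apply (subgroup_bij A); auto.
    - unfold W. rewrite inv_id. split; [apply subgroup_id|]; auto.
    - intros f g [Af [Mf Mf']] [Ag [Mg Mg']].
      assert (bijective_perm f) by (apply (subgroup_bij A); auto).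
      assert (bijective_perm g) by (apply (subgroup_bij A); auto).
      split; [apply subgroup_comp; auto|].
      rewrite inv_comp by assumption. split; apply Hcomp; auto.
    - intros f [Af [Mf Mf']]. split; [apply subgroup_inv; auto|].
      rewrite invK by (apply (subgroup_bij A); auto). auto. }
  intros a Ha. apply HAgen in Ha. apply (gen_min (fun g => In g gs) W HW) in Ha; [apply Ha|].
  intros g Hg. split; [apply HAgen, gen_incl; exact Hg|].
  split; apply Hgs, in_or_app; [left | right; apply in_map]; exact Hg.
Qed.

(* The representative [t0] of the coset [K] lies in [K]; then [k t0 = t' f] forces [t'] into [K]. *)
Lemma schreier_gen :
  (forall g, In g (gs ++ map inv gs) -> permutes_cosets g) ->
  (forall t, In t ts -> K t -> Gk t) -> subset K Gk.
Proof.
  intros Hgs HtsK k Hk.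
  destruct (Hcov (fun x => x)) as [t0 [Ht0 [b0 [Hb0 E0]]]]; [apply subgroup_id; auto|].
  assert (Kt0 : K t0).
  { replace t0 with (inv b0); [apply subgroup_inv; auto|]. apply inv_unique.
    split; intro x; [exact (eq_sym (equal_f E0 x))|].
    apply (perm_inj t0 (subgroup_bij A t0 HA (Hts t0 Ht0))).
    rewrite <- (equal_f E0 (t0 x)). reflexivity. }
  destruct (schreier_permutes Hgs k (HKA k Hk) t0 Ht0) as [t' [Ht' [f [Hf E]]]].
  assert (Bf : bijective_perm f) by (apply (subgroup_bij Gk); auto).
  assert (Bt0 : bijective_perm t0) by (apply (subgroup_bij K); auto).
  assert (Kt' : K t').
  { replace t' with (fun x => k (t0 (inv f x))).
    { apply (subgroup_comp K k); [exact HK | exact Hk |].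
      apply (subgroup_comp K t0); [exact HK | exact Kt0 | apply subgroup_inv; auto]. }
    apply functional_extensionality; intro x. rewrite <- (permKV f Bf x) at 2.
    exact (equal_f E (inv f x)). }
  replace k with (fun x => t' (f (inv t0 x))).
  - apply (subgroup_comp Gk t'); [exact HGk | apply HtsK; assumption |].
    apply (subgroup_comp Gk f); [exact HGk | exact Hf |].
    apply subgroup_inv; [exact HGk | apply HtsK; assumption].
  - apply functional_extensionality; intro x. rewrite <- (equal_f E (inv t0 x)), permKV; auto.
Qed.

End Schreier.

Lemma schreier_fin_gen A K m : is_subgroup A -> is_subgroup K -> subset K A ->
  fin_gen A -> covered_by A K m -> fin_gen K.
Proof.
  intros HA HK HKA [gs HAgen] [ts [_ [Hts Hcov]]].
  set (gs2 := gs ++ map inv gs).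
  assert (Hgs2 : forall g, In g gs2 -> A g).
  { intros g Hg. apply in_app_or in Hg. destruct Hg as [Hg|Hg].
    - apply HAgen, gen_incl, Hg.
    - apply in_map_iff in Hg. destruct Hg as [g0 [<- Hg0]].
      apply subgroup_inv; auto. apply HAgen, gen_incl, Hg0. }
  destruct (list_choice (list_prod gs2 ts) (fun p k => exists t', In t' ts /\
      (fun x => fst p (snd p x)) = (fun x => t' (k x))) K) as [F [HFK HF]].
  { intros [g t] Hin. apply in_prod_iff in Hin. destruct Hin as [Hg Ht].
    destruct (Hcov (fun x => g (t x))) as [t' [Ht' [b [Hb E]]]]; [apply subgroup_comp; auto|].
    exists b. split; [exact Hb|]. exists t'. split; assumption. }
  destruct (list_choice ts (fun t k => K t -> k = t) K) as [TK [HTKK HTK]].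
  { intros t _. destruct (classic (K t)) as [Kt|Kt].
    - exists t. auto.
    - exists (fun x => x). split; [apply subgroup_id; auto | tauto]. }
  set (ks := F ++ TK).
  assert (HksK : forall f, In f ks -> K f).
  { intros f Hf. apply in_app_or in Hf. destruct Hf; auto. }
  set (Gk := gen (fun g => In g ks)).
  assert (HGk : is_subgroup Gk) by (apply gen_subgroup; intros f Hf; apply (subgroup_bij K); auto).
  exists ks. intros k. split; [|apply (gen_min _ K HK HksK)].
  apply (schreier_gen A K Gk gs ts); auto.
  - apply gen_min; auto.
  - intros g Hg t Ht. destruct (HF (g, t)) as [b [Hb [t' [Ht' E]]]]; [apply in_prod; auto|].
    exists t'. split; [exact Ht'|]. exists b. split; [apply gen_incl, in_or_app; left|]; auto.
  - intros t Ht Kt. destruct (HTK t Ht) as [t' [Ht' E]]. rewrite <- (E Kt).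
    apply gen_incl, in_or_app. right. exact Ht'.
Qed.

(** * Normal closures *)

Definition normal_closure D n0 : ps := gen (fun f => exists d, D d /\ f = conjp d n0).

Lemma normal_closure_subgroup D n0 : is_subgroup D -> bijective_perm n0 ->
  is_subgroup (normal_closure D n0).
Proof.
  intros HD Hn0. apply gen_subgroup. intros f [d [Hd ->]].
  apply bij_conjp; auto. apply (subgroup_bij D); auto.
Qed.

Lemma normal_closure_nontrivial D n0 : is_subgroup D -> ~ is_id n0 ->
  nontrivial_group (normal_closure D n0).
Proof.
  intros HD Hn0. exists n0. split; [|exact Hn0]. apply gen_incl.
  exists (fun x => x). split; [apply subgroup_id; auto|].
  unfold conjp. rewrite inv_id. reflexivity.
Qed.

Lemma normal_closure_normalized D n0 : is_subgroup D -> bijective_perm n0 ->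
  normalized_by (normal_closure D n0) D.
Proof.
  intros HD Hn0 d x Hd Hx. assert (Bd : bijective_perm d) by (apply (subgroup_bij D); auto).
  exists (conjp d x). split; [|apply conj_to_conjp, Bd].
  set (N := normal_closure D n0).
  assert (HN : is_subgroup N) by (apply normal_closure_subgroup; auto).
  enough (Hsub : subset N (fun f => N f /\ N (conjp d f))) by apply (Hsub x Hx).
  apply gen_min; [apply conjp_subgroup_preimage; auto|].
  intros f [d' [Hd' ->]]. assert (bijective_perm d') by (apply (subgroup_bij D); auto).
  split; apply gen_incl; [exists d'; auto|].
  exists (fun x => d (d' x)). split; [apply subgroup_comp; auto|].
  symmetry. apply conjpM; auto.
Qed.

End Permutations.

(** * The displacement configuration *)

Section Configuration.
Context {Omega : Type}.
Notation perm := (perm_t Omega).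
Notation ps := (pset Omega).
Implicit Types (f g x y : perm) (V : Omega -> Prop).
Variables (H : nat -> ps) (G : ps) (P : list perm) (Om : perm -> Omega -> Prop)
  (s : perm) (k m : nat).
Hypotheses (hG : is_subgroup G) (hHk : is_subgroup (H k))
  (hDC : displacement_configuration P Om) (hs : In s P) (hsb : bijective_perm s)
  (hNT : forall r, In r P -> nontrivial_group (Rist G (Om r)))
  (hFC : forall r, In r P -> FC_trivial (Rist G (Om r)) m)
  (hidx : index_le (Dset G P Om H s k) (R_gen G P Om) m).

Notation U := (union_conf P Om).
Notation R := (R_gen G P Om).
Notation R_gens := (fun f => exists r, In r P /\ Rist G (Om r) f).
Notation Y := (Yset G P Om H s k).
Notation D := (Dset G P Om H s k).

Definition U_M z := exists r, Mset P Om s r /\ Om r z.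

Definition saturated V :=
  forall a, In a P -> (forall z, Om a z -> V z) \/ (forall z, Om a z -> ~ V z).

Lemma Mset_self : Mset P Om s s.
Proof.
  destruct hDC as [_ [_ [_ C4]]]. split; [exact hs|].
  intros a Ha z Hz Hsz. apply (proj1 (C4 s hs) z Hz). exists a. auto.
Qed.

Lemma U_M_U z : U_M z -> U z.
Proof. intros [r [[Hr _] Hz]]. exists r. auto. Qed.

Lemma U_M_s_out z : U_M z -> ~ U (s z).
Proof. intros [r [[_ HM] Hz]] [a [Ha Haz]]. exact (HM a Ha z Hz Haz). Qed.

Lemma s_fix z : U z -> ~ U_M z -> s z = z.
Proof.
  destruct hDC as [_ [_ [C3 _]]]. intros [a [Ha Hz]] HnM.
  destruct (C3 s a hs Ha) as [Fix|Out]; [exact (Fix z Hz)|].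
  exfalso. apply HnM. exists a. split; [|exact Hz]. split; [exact Ha|].
  intros a' Ha' z' Hz' Hsz'. apply (Out z' Hz'). exists a'. auto.
Qed.

Lemma U_M_sinv_out z : U_M z -> ~ U (inv s z).
Proof.
  intros Hz Hu. destruct (classic (U_M (inv s z))) as [HM|HM].
  - apply (U_M_s_out _ HM). rewrite permKV by exact hsb. apply U_M_U, Hz.
  - apply HM. rewrite <- (s_fix _ Hu HM), permKV by exact hsb. exact Hz.
Qed.

Lemma Om_s_ss_out z : Om s z -> ~ U (s (s z)).
Proof.
  destruct hDC as [_ [_ [_ C4]]]. intros Hz [a [Ha Hc]]. exact (proj2 (C4 s hs) z Hz a Ha Hc).
Qed.

Lemma saturated_U_M : saturated U_M.
Proof.
  destruct hDC as [_ [C1 _]]. intros a Ha.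
  destruct (classic (exists z, Om a z /\ U_M z)) as [[z0 [Hz0 [r [Hr Hrz]]]]|Hno].
  - left. destruct (C1 a r Ha (proj1 Hr)) as [E|E]; [|exfalso; exact (E z0 (conj Hz0 Hrz))].
    intros z Hz. exists r. split; [exact Hr|]. apply E, Hz.
  - right. intros z Hz HU. apply Hno. eauto.
Qed.

Lemma saturated_Om r : In r P -> saturated (Om r).
Proof.
  destruct hDC as [_ [C1 _]]. intros Hr a Ha. destruct (C1 a r Ha Hr) as [E|E].
  - left. intros z Hz. apply E, Hz.
  - right. intros z Hz Hr'. exact (E z (conj Hz Hr')).
Qed.

Lemma R_subgroup : is_subgroup R.
Proof. apply gen_subgroup. intros f [r [_ [Gf _]]]. apply (subgroup_bij G); auto. Qed.

Lemma R_comp a b : R a -> R b -> R (fun z => a (b z)).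
Proof. apply subgroup_comp, R_subgroup. Qed.

Lemma R_inv a : R a -> R (inv a).
Proof. apply subgroup_inv, R_subgroup. Qed.

Lemma Rist_R r f : In r P -> Rist G (Om r) f -> R f.
Proof. intros Hr Hf. apply gen_incl. exists r. auto. Qed.

Lemma R_props f : R f ->
  G f /\ supp_in f U /\ forall V, saturated V -> preserves f V.
Proof.
  apply (gen_min R_gens (fun f => G f /\ supp_in f U /\ forall V, saturated V -> preserves f V)).
  - apply subgroup_intro.
    + intros g [Gg _]. apply (subgroup_bij G); auto.
    + split; [apply subgroup_id; auto|]. split; [intros z _; reflexivity|]. intros V _ z. tauto.
    + intros a b [Ga [Sa Pa]] [Gb [Sb Pb]].
      split; [apply subgroup_comp; auto|]. split; [apply supp_comp; auto|].
      intros V HV. apply preserves_comp; auto.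
    + intros a [Ga [Sa Pa]]. assert (bijective_perm a) by (apply (subgroup_bij G); auto).
      split; [apply subgroup_inv; auto|]. split; [apply supp_inv; auto|].
      intros V HV. apply preserves_inv; auto.
  - intros g [r [Hr [Gg Sg]]]. assert (Bg : bijective_perm g) by (apply (subgroup_bij G); auto).
    split; [exact Gg|]. split; [apply (supp_mono g (Om r)); [exact Sg | intros z Hz; exists r; auto]|].
    intros V HV. destruct (HV r Hr) as [In_V|Out_V].
    + apply (preserves_sub g (Om r)); auto.
    + apply (preserves_disj g (Om r)); auto.
Qed.

Lemma R_bij f : R f -> bijective_perm f.
Proof. apply (subgroup_bij R), R_subgroup. Qed.

Lemma R_G f : R f -> G f.
Proof. intros Hf. exact (proj1 (R_props f Hf)). Qed.

Lemma R_supp f : R f -> supp_in f U.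
Proof. intros Hf. exact (proj1 (proj2 (R_props f Hf))). Qed.

Lemma R_pres f V : R f -> saturated V -> preserves f V.
Proof. intros Hf. exact (proj2 (proj2 (R_props f Hf)) V). Qed.

Lemma R_pres_Om r f : In r P -> R f -> preserves f (Om r).
Proof. intros Hr Hf. apply R_pres; [exact Hf | apply saturated_Om, Hr]. Qed.

(* Each generator of [R] is supported in a single [Om r], which lies inside or outside [V]. *)
Lemma R_restr V f : saturated V -> R f -> R (restr V f).
Proof.
  intros HV Hf. refine (proj2 (gen_min R_gens (fun f => R f /\ R (restr V f)) _ _ f Hf)).
  - apply (subgroup_preimage R R); [exact R_subgroup | exact R_subgroup | apply restr_id | |].
    + intros a b _ Hb. apply restr_comp, R_pres; auto.
    + intros a Ha. symmetry. apply restr_inv; [apply R_bij | apply R_pres]; auto.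
  - intros g [r [Hr Hg]]. split; [apply gen_incl; exists r; auto|].
    destruct Hg as [Gg Sg]. destruct (HV r Hr) as [In_V|Out_V].
    + rewrite restr_self; [apply (Rist_R r); [|split]; assumption|].
      apply (supp_mono g (Om r)); auto.
    + replace (restr V g) with (fun z : Omega => z); [apply subgroup_id, R_subgroup|].
      apply functional_extensionality; intro z. destruct (classic (V z)) as [Hz|Hz].
      * rewrite restr_in by exact Hz. symmetry. apply Sg. intro Hr'. exact (Out_V z Hr' Hz).
      * rewrite restr_out by exact Hz. reflexivity.
Qed.

Notation D_gens := (fun f => exists c d, Y c /\ Y d /\ forall z, f (d z) = c z).

Lemma D_gen_eq f c d : R d -> (forall z, f (d z) = c z) -> f = (fun z => c (inv d z)).
Proof.
  intros Rd E. apply functional_extensionality; intro z.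
  rewrite <- E, permKV; [reflexivity | apply R_bij, Rd].
Qed.

Lemma D_R f : D f -> R f.
Proof.
  apply (gen_min D_gens R R_subgroup). intros g [c [d [[Rc _] [[Rd _] E]]]].
  rewrite (D_gen_eq g c d Rd E). exact (R_comp _ _ Rc (R_inv _ Rd)).
Qed.

Lemma D_subgroup : is_subgroup D.
Proof. apply gen_subgroup. intros f Hf. apply R_bij, D_R, gen_incl, Hf. Qed.

Lemma restr_U_M_comp a b : R b ->
  restr U_M (fun z => a (b z)) = (fun z => restr U_M a (restr U_M b z)).
Proof. intros Rb. apply restr_comp, R_pres; [exact Rb | exact saturated_U_M]. Qed.

Lemma restr_U_M_inv a : R a -> restr U_M (inv a) = inv (restr U_M a).
Proof. intros Ra. symmetry. apply restr_inv; [apply R_bij | apply R_pres, saturated_U_M]; exact Ra. Qed.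

Lemma restr_U_M_R a : R a -> R (restr U_M a).
Proof. apply R_restr, saturated_U_M. Qed.

Lemma R_conjp l a : R l -> R a -> R (conjp l a).
Proof.
  intros Rl Ra. unfold conjp.
  apply R_comp; [exact Rl|]. apply R_comp; [exact Ra | apply R_inv, Rl].
Qed.

(* Off [U_M], [c] is supported where [s] is trivial. *)
Lemma conjp_s_restr_U_M c : R c -> conjp c s = conjp (restr U_M c) s.
Proof.
  intros Rc. set (c' := restr (fun z => ~ U_M z) c).
  assert (Bc := R_bij c Rc). assert (Pc := R_pres c U_M Rc saturated_U_M).
  assert (Bc' : bijective_perm c').
  { apply restr_bij; [exact Bc|]. intro z. rewrite (Pc z). tauto. }
  assert (Sc' : supp_in c' (fun z => U z /\ ~ U_M z)).
  { intros z Hz. destruct (classic (U_M z)) as [HM|HM]; [apply restr_out; tauto|].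
    unfold c'. rewrite restr_in by exact HM. apply R_supp; [exact Rc|]. tauto. }
  assert (Cs : conjp c' s = s).
  { apply functional_extensionality; intro z. unfold conjp.
    rewrite (commute_fix c' s _ Bc' hsb Sc') by (intros x [Hu HM]; apply s_fix; assumption).
    rewrite (permKV c' Bc'). reflexivity. }
  rewrite (restr_split U_M c Pc) at 1. fold c'.
  rewrite conjpM, Cs; [reflexivity | apply restr_bij; auto | exact Bc'].
Qed.

Lemma Y_H c : Y c -> H k (conjp c s).
Proof.
  intros [Rc [h [Hh Hc]]]. replace (conjp c s) with h; [exact Hh|].
  apply functional_extensionality; intro z. unfold conjp.
  rewrite Hc, permKV by (apply R_bij, Rc). reflexivity.
Qed.

(** * Good pairs *)

Definition good x y := R x /\ R y /\ supp_in x U_M /\ supp_in y U_M /\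
  H k (fun z => x (conjp s y z)).

Lemma commute_sconj x y : bijective_perm x -> bijective_perm y -> supp_in x U_M -> supp_in y U_M ->
  forall z, x (conjp s y z) = conjp s y (x z).
Proof.
  intros Bx By Sx Sy. apply (commute_disj x (conjp s y) U_M (fun z => U_M (inv s z))); auto.
  - apply bij_conjp; auto.
  - apply supp_conjp; auto.
  - intros z HM HM'. exact (U_M_sinv_out z HM (U_M_U _ HM')).
Qed.

Lemma good_bij x y : good x y -> bijective_perm x /\ bijective_perm y.
Proof. intros [Rx [Ry _]]. split; apply R_bij; assumption. Qed.

Lemma good_id : good (fun z => z) (fun z => z).
Proof.
  split; [apply subgroup_id, R_subgroup|]. split; [apply subgroup_id, R_subgroup|].
  split; [intros z _; reflexivity|]. split; [intros z _; reflexivity|].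
  rewrite conjp_id by exact hsb. apply subgroup_id, hHk.
Qed.

Lemma good_mul x y x' y' : good x y -> good x' y' ->
  good (fun z => x (x' z)) (fun z => y (y' z)).
Proof.
  intros Gd Gd'. destruct (good_bij x y Gd) as [Bx By]. destruct (good_bij x' y' Gd') as [Bx' By'].
  destruct Gd as [Rx [Ry [Sx [Sy Hxy]]]]. destruct Gd' as [Rx' [Ry' [Sx' [Sy' Hxy']]]].
  split; [apply R_comp; assumption|]. split; [apply R_comp; assumption|].
  split; [apply supp_comp; auto|]. split; [apply supp_comp; auto|].
  replace (fun z => x (x' (conjp s (fun z => y (y' z)) z)))
    with (fun z => x (conjp s y (x' (conjp s y' z))));
    [exact (subgroup_comp _ (fun z => x (conjp s y z)) _ hHk Hxy Hxy')|].
  apply functional_extensionality; intro z. rewrite (conjp_comp s y y' hsb).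
  rewrite (commute_sconj x' y); auto.
Qed.

Lemma good_inv x y : good x y -> good (inv x) (inv y).
Proof.
  intros Gd. destruct (good_bij x y Gd) as [Bx By]. destruct Gd as [Rx [Ry [Sx [Sy Hxy]]]].
  split; [apply R_inv; assumption|]. split; [apply R_inv; assumption|].
  split; [apply supp_inv; auto|]. split; [apply supp_inv; auto|].
  replace (fun z => inv x (conjp s (inv y) z)) with (inv (fun z => x (conjp s y z)));
    [apply subgroup_inv; auto|].
  rewrite inv_comp, <- conjp_inv by (auto; apply bij_conjp; auto).
  apply functional_extensionality; intro z. symmetry.
  apply commute_sconj; try apply bij_inv; try apply supp_inv; auto.
Qed.

Lemma Y_good a b : Y a -> Y b ->
  good (fun z => restr U_M a (inv (restr U_M b) z)) (fun z => inv (restr U_M a) (restr U_M b z)).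
Proof.
  intros Ya Yb. set (A := restr U_M a). set (B := restr U_M b).
  assert (RA : R A) by (apply restr_U_M_R, Ya). assert (RB : R B) by (apply restr_U_M_R, Yb).
  assert (BA := R_bij A RA). assert (BB := R_bij B RB).
  assert (SA : supp_in A U_M) by apply restr_supp. assert (SB : supp_in B U_M) by apply restr_supp.
  split; [apply R_comp; [exact RA | apply R_inv, RB]|].
  split; [apply R_comp; [apply R_inv, RA | exact RB]|].
  split; [apply supp_comp; [|apply supp_inv]; auto|].
  split; [apply supp_comp; [apply supp_inv|]; auto|].
  (* A s A^-1 * (B s B^-1)^-1 = (A B^-1) * s (A^-1 B) s^-1, as B^-1 commutes with s (A^-1 B) s^-1 *)
  replace (fun z => A (inv B (conjp s (fun w => inv A (B w)) z)))
    with (fun z => conjp A s (inv (conjp B s) z)).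
  - assert (HA : H k (conjp A s)) by (unfold A; rewrite <- conjp_s_restr_U_M; [apply Y_H|]; apply Ya).
    assert (HB : H k (conjp B s)) by (unfold B; rewrite <- conjp_s_restr_U_M; [apply Y_H|]; apply Yb).
    apply subgroup_comp; [exact hHk | exact HA | apply subgroup_inv; [exact hHk | exact HB]].
  - rewrite <- conjp_inv by assumption. apply functional_extensionality; intro z. unfold conjp.
    f_equal. pose proof (commute_sconj (inv B) (fun w => inv A (B w))) as C. unfold conjp in C.
    rewrite C; [reflexivity | apply bij_inv; auto | apply bij_comp; [apply bij_inv|]; auto
      | apply supp_inv; auto | apply supp_comp; [apply supp_inv|]; auto].
Qed.

Definition good_fst x := exists y, good x y.
Definition good_snd y := exists x, good x y.

Lemma good_fst_subgroup : is_subgroup good_fst.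
Proof.
  apply subgroup_intro.
  - intros x [y Gd]. apply (good_bij x y Gd).
  - exists (fun z => z). exact good_id.
  - intros a b [y Ga] [y' Gb]. eexists. exact (good_mul _ _ _ _ Ga Gb).
  - intros a [y Ga]. eexists. exact (good_inv _ _ Ga).
Qed.

Lemma good_snd_subgroup : is_subgroup good_snd.
Proof.
  apply subgroup_intro.
  - intros y [x Gd]. apply (good_bij x y Gd).
  - exists (fun z => z). exact good_id.
  - intros a b [x Ga] [x' Gb]. eexists. exact (good_mul _ _ _ _ Ga Gb).
  - intros a [x Ga]. eexists. exact (good_inv _ _ Ga).
Qed.

Lemma D_good_fst d : D d -> good_fst (restr U_M d).
Proof.
  intros Hd. refine (proj2 (gen_min D_gens (fun d => R d /\ good_fst (restr U_M d)) _ _ d Hd)).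
  - apply (subgroup_preimage R good_fst); [exact R_subgroup | exact good_fst_subgroup | apply restr_id | |].
    + intros a b _ Rb. apply restr_U_M_comp, Rb.
    + intros a Ra. apply restr_U_M_inv, Ra.
  - intros f [c [d' [Yc [Yd E]]]]. assert (Rc : R c) by apply Yc. assert (Rd : R d') by apply Yd.
    assert (Rd' : R (inv d')) by (apply R_inv, Rd).
    rewrite (D_gen_eq f c d' Rd E). split; [exact (R_comp _ _ Rc Rd')|].
    rewrite restr_U_M_comp, restr_U_M_inv by assumption. eexists. apply Y_good; assumption.
Qed.

Lemma D_good_snd c0 d : Y c0 -> D d -> good_snd (restr U_M (conjp (inv c0) d)).
Proof.
  intros Yc0 Hd. assert (R0 : R c0) by apply Yc0. assert (B0 := R_bij c0 R0).
  assert (Ri0 : R (inv c0)) by (apply R_inv, R0).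
  assert (Bi0 := R_bij _ Ri0).
  refine (proj2 (gen_min D_gens
    (fun d => R d /\ good_snd (restr U_M (conjp (inv c0) d))) _ _ d Hd)).
  - apply (subgroup_preimage R good_snd); [exact R_subgroup | exact good_snd_subgroup | | |].
    + rewrite conjp_id by exact Bi0. apply restr_id.
    + intros a b _ Rb. rewrite conjp_comp by exact Bi0. apply restr_U_M_comp, R_conjp; assumption.
    + intros a Ra. rewrite conjp_inv by (auto; apply R_bij, Ra). apply restr_U_M_inv, R_conjp; assumption.
  - intros f [c [d' [Yc [Yd E]]]]. assert (Rc : R c) by apply Yc. assert (Rd : R d') by apply Yd.
    assert (Rd' : R (inv d')) by (apply R_inv, Rd).
    rewrite (D_gen_eq f c d' Rd E). split; [exact (R_comp _ _ Rc Rd')|].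
    set (a := fun w => inv c0 (c w)). set (b := fun w => inv c0 (d' w)).
    assert (Ra : R a) by exact (R_comp _ _ Ri0 Rc).
    assert (Rb : R b) by exact (R_comp _ _ Ri0 Rd).
    assert (Rib : R (inv b)) by (apply R_inv, Rb).
    replace (conjp (inv c0) (fun z => c (inv d' z))) with (fun z => a (inv b z)).
    2: { apply functional_extensionality; intro z. unfold conjp, a, b.
         rewrite (inv_comp (inv c0) d' Bi0 (R_bij d' Rd)), (invK c0 B0). reflexivity. }
    rewrite (restr_U_M_comp a (inv b) Rib), (restr_U_M_inv b Rb). unfold a, b.
    rewrite (restr_U_M_comp (inv c0) c Rc), (restr_U_M_comp (inv c0) d' Rd), (restr_U_M_inv c0 R0).
    apply (subgroup_comp good_snd (fun z => inv (restr U_M c0) (restr U_M c z)));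
      [exact good_snd_subgroup | | apply subgroup_inv; [exact good_snd_subgroup|]];
      eexists; apply Y_good; assumption.
Qed.

Lemma R_covered_by_D : covered_by R D m.
Proof.
  destruct hidx as [gs [Hl [Hgs Hc]]]. exists gs. split; [exact Hl|]. split; [exact Hgs|].
  intros a Ra. destruct (Hc a Ra) as [g [Hg [d [Hd E]]]].
  exists g. split; [exact Hg|]. exists d. split; [exact Hd|]. apply functional_extensionality, E.
Qed.

Definition restr_D r : ps := fun f => exists d, D d /\ f = restr (Om r) d.

Lemma restr_D_subgroup r : In r P -> is_subgroup (restr_D r).
Proof.
  intros Hr. apply restr_image_subgroup; [exact D_subgroup|].
  intros l Hl. exact (R_pres_Om _ _ Hr (D_R _ Hl)).
Qed.

Lemma Rist_covered_by_restr_D r : In r P -> covered_by (Rist G (Om r)) (restr_D r) m.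
Proof.
  intros Hr. destruct R_covered_by_D as [gs [Hl [_ Hc]]].
  apply (covered_by_weaken _ (fun b => restr_D r b /\ Rist G (Om r) b)); [tauto|].
  apply (covered_by_intersect _ _ (map (restr (Om r)) gs));
    [apply Rist_subgroup, hG | apply restr_D_subgroup, Hr | rewrite length_map; exact Hl |].
  intros a Ha. destruct (Hc a (Rist_R r a Hr Ha)) as [g [Hg [d [Hd E]]]].
  exists (restr (Om r) g). split; [apply in_map, Hg|].
  exists (restr (Om r) d). split; [exists d; auto|].
  rewrite <- restr_comp, <- E by exact (R_pres_Om _ _ Hr (D_R _ Hd)).
  symmetry. exact (restr_self _ _ (proj2 Ha)).
Qed.

Lemma Rist_covered_by_good_snd c0 r : Y c0 -> Mset P Om s r ->
  covered_by (Rist G (Om r)) (fun b => good_snd b /\ Rist G (Om r) b) m.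
Proof.
  intros Yc0 Hr. assert (R0 : R c0) by apply Yc0. assert (B0 := R_bij c0 R0).
  assert (Ri0 : R (inv c0)) by (apply R_inv, R0).
  destruct R_covered_by_D as [gs [Hl [Hgs Hc]]].
  apply (covered_by_intersect _ _ (map (fun g => restr U_M (conjp (inv c0) g)) gs));
    [apply Rist_subgroup, hG | exact good_snd_subgroup | rewrite length_map; exact Hl |].
  intros a Ha. assert (Ra : R a) by (apply (Rist_R r); [apply Hr | exact Ha]).
  destruct (Hc (conjp c0 a) (R_conjp c0 a R0 Ra)) as [g [Hg [d [Hd E]]]].
  exists (restr U_M (conjp (inv c0) g)).
  split; [apply (in_map (fun g => restr U_M (conjp (inv c0) g))), Hg|].
  exists (restr U_M (conjp (inv c0) d)). split; [apply D_good_snd; assumption|].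
  rewrite <- restr_U_M_comp by (apply R_conjp, D_R; assumption).
  rewrite <- conjp_comp, <- E, conjpK by (apply R_bij; assumption).
  symmetry. apply restr_self. apply (supp_mono a (Om r)); [exact (proj2 Ha) | intros z Hz; exists r; auto].
Qed.

Lemma Y_nonempty : exists c0, Y c0.
Proof.
  apply NNPP. intro Hno.
  assert (Dtriv : forall d, D d -> d = (fun z => z)).
  { apply (gen_min D_gens (fun f => f = (fun z => z))).
    - apply subgroup_intro; [intros f ->; exact bij_id | reflexivity | intros f g -> ->; reflexivity |].
      intros f ->. exact inv_id.
    - intros f [c [_ [Yc _]]]. exfalso. exact (Hno (ex_intro _ c Yc)). }
  destruct (hNT s hs) as [y [Hy Hny]]. apply Hny.
  apply (FC_trivial_centralizer (Rist G (Om s)) (restr_D s) m);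
    [apply Rist_subgroup, hG | apply Rist_covered_by_restr_D, hs | apply hFC, hs | exact Hy |].
  intros b [d [Hd ->]] z. rewrite (Dtriv d Hd), restr_id. reflexivity.
Qed.

Lemma exists_noncommuting c0 r t : Y c0 -> Mset P Om s r -> Rist G (Om r) t -> ~ is_id t ->
  exists y, good_snd y /\ Rist G (Om r) y /\ ~ (forall z, t (y z) = y (t z)).
Proof.
  intros Yc0 Hr Ht Hnt. apply NNPP. intro Hno. apply Hnt.
  apply (FC_trivial_centralizer _ _ m t (Rist_subgroup _ _ hG) (Rist_covered_by_good_snd c0 r Yc0 Hr));
    [apply hFC, Hr | exact Ht |].
  intros b [Sb Rb] z. apply NNPP. intro Hbz. apply Hno. exists b. split; [exact Sb|]. split; [exact Rb|].
  intro C. exact (Hbz (C z)).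
Qed.

(** * A non-trivial element of [H k] supported in a single [Om r] *)

Section Commutator.
Variable c0 : perm.
Hypothesis hc0 : Y c0.

Let C := restr U_M c0.

Lemma C_R : R C.
Proof. apply restr_U_M_R, hc0. Qed.

Lemma C_bij : bijective_perm C.
Proof. apply R_bij, C_R. Qed.

Lemma H_conj_C_s j : H k j -> H k (fun z => inv (conjp C s) (j (conjp C s z))).
Proof.
  intros Hj. assert (Hg : H k (conjp C s)).
  { unfold C. rewrite <- conjp_s_restr_U_M by apply hc0. apply Y_H, hc0. }
  apply (subgroup_comp _ (inv (conjp C s))); [exact hHk | apply subgroup_inv; assumption |].
  apply (subgroup_comp _ j); assumption.
Qed.

Definition conj_inv_Cs x : perm := fun v => inv s (inv C (x (C (s v)))).

Lemma conj_inv_Cs_supp x : bijective_perm x -> supp_in x U_M ->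
  supp_in (conj_inv_Cs x) (fun v => U_M (s v)).
Proof.
  intros Bx Sx v Hv. unfold conj_inv_Cs.
  assert (SC : supp_in C U_M) by apply restr_supp.
  rewrite (SC _ Hv), (Sx _ Hv), (supp_inv C U_M C_bij SC _ Hv). apply permK, hsb.
Qed.

Lemma conj_inv_Cs_bij x : bijective_perm x -> bijective_perm (conj_inv_Cs x).
Proof.
  intros Bx. unfold conj_inv_Cs. apply bij_comp; [apply bij_inv, hsb|].
  apply bij_comp; [apply bij_inv, C_bij|]. apply bij_comp; [exact Bx|].
  apply bij_comp; [exact C_bij | exact hsb].
Qed.

Lemma conj_C_s_good x y : good x y ->
  (fun z => inv (conjp C s) (x (conjp s y (conjp C s z)))) = (fun z => conj_inv_Cs x (conjp C y z)).
Proof.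
  intros Gd. destruct (good_bij x y Gd) as [Bx By]. destruct Gd as [Rx [Ry [Sx [Sy _]]]].
  assert (SC : supp_in C U_M) by apply restr_supp.
  rewrite <- (conjp_inv C s C_bij hsb). apply functional_extensionality; intro z.
  pose proof (commute_sconj C y C_bij By SC Sy) as E. unfold conjp in E |- *.
  rewrite <- E, (permK s hsb).
  change (C (conj_inv_Cs x (y (inv C z))) = conj_inv_Cs x (C (y (inv C z)))).
  apply (commute_disj C (conj_inv_Cs x) U_M (fun v => U_M (s v)) C_bij (conj_inv_Cs_bij x Bx) SC
    (conj_inv_Cs_supp x Bx Sx)).
  intros v HM HM'. exact (U_M_s_out v HM (U_M_U _ HM')).
Qed.

Lemma Rist_conjp_C r y : In r P -> Rist G (Om r) y -> Rist G (Om r) (conjp C y).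
Proof. intros Hr. apply Rist_conjp; [exact hG | apply R_G, C_R | exact (R_pres_Om _ _ Hr C_R)]. Qed.

Lemma n0_of_trivial_fst x' y' : good x' y' -> is_id x' -> Rist G (Om s) y' -> ~ is_id y' ->
  exists n0, H k n0 /\ Rist G (Om s) n0 /\ ~ is_id n0.
Proof.
  intros Gd Hx' Hy' Hny'. exists (conjp C y'). split; [|split].
  - replace (conjp C y') with (fun z => conj_inv_Cs x' (conjp C y' z)).
    + rewrite <- (conj_C_s_good x' y' Gd). apply (H_conj_C_s (fun z => x' (conjp s y' z))), Gd.
    + apply functional_extensionality; intro z. unfold conj_inv_Cs. rewrite Hx', !permK; auto; apply C_bij.
  - apply Rist_conjp_C; [exact hs | exact Hy'].
  - intros Hid. apply Hny'. intro z.
    rewrite <- (conjpK C y' C_bij). replace (conjp C y') with (fun z : Omega => z).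
    + unfold conjp. rewrite (permKV _ (bij_inv C C_bij)). reflexivity.
    + apply functional_extensionality; intro w. symmetry. apply Hid.
Qed.

Lemma commp_conj_C_s x' y' x y : good x' y' -> Rist G (Om s) y' -> good x y ->
  commp (fun z => x' (conjp s y' z)) (fun z => inv (conjp C s) (x (conjp s y (conjp C s z))))
  = commp x' (conjp C y).
Proof.
  intros Gd' Hy' Gd. rewrite (conj_C_s_good x y Gd).
  destruct (good_bij _ _ Gd') as [Bx' By']. destruct (good_bij _ _ Gd) as [Bx By].
  destruct Gd' as [_ [_ [Sx' _]]]. destruct Gd as [_ [_ [Sx [Sy _]]]].
  assert (BT := bij_conjp s y' hsb By'). assert (BP := conj_inv_Cs_bij x Bx).
  assert (BQ := bij_conjp C y C_bij By).
  assert (ST : supp_in (conjp s y') (fun z => Om s (inv s z)))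
    by (apply supp_conjp; [exact hsb | exact (proj2 Hy')]).
  assert (SP := conj_inv_Cs_supp x Bx Sx).
  assert (SQ : supp_in (conjp C y) U_M).
  { apply (supp_mono _ (fun z => U_M (inv C z))); [apply supp_conjp; [exact C_bij | exact Sy]|].
    intros z. apply (preserves_inv C U_M C_bij), R_pres; [exact C_R | exact saturated_U_M]. }
  assert (D1 : forall z, Om s (inv s z) -> U_M (s z) -> False).
  { intros z H1 H2. apply (Om_s_ss_out _ H1). rewrite permKV by exact hsb. apply U_M_U, H2. }
  assert (D2 : forall z, Om s (inv s z) -> U_M z -> False).
  { intros z H1 H2. apply (U_M_sinv_out z H2). exists s. auto. }
  assert (D3 : forall z, U_M (s z) -> U_M z -> False).
  { intros z H1 H2. exact (U_M_s_out z H2 (U_M_U _ H1)). }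
  apply (commp_reduce x' (conjp s y') (conj_inv_Cs x) (conjp C y)); auto.
  - exact (commute_disj _ _ _ _ BT BP ST SP D1).
  - exact (commute_disj _ _ _ _ BT BQ ST SQ D2).
  - exact (commute_disj _ _ _ _ BP Bx' SP Sx' D3).
  - exact (commute_disj _ _ _ _ BP BQ SP SQ D3).
Qed.

Lemma n0_of_moving_fst x' y' z0 : good x' y' -> Rist G (Om s) y' -> x' z0 <> z0 ->
  exists r, Mset P Om s r /\ exists n0, H k n0 /\ Rist G (Om r) n0 /\ ~ is_id n0.
Proof.
  intros Gd' Hy' Hz0. assert (Gd'c := Gd'). destruct Gd'c as [Rx' [_ [Sx' [_ Hj']]]].
  assert (Bx' := R_bij x' Rx').
  destruct (classic (U_M z0)) as [[r [Hr Hrz0]]|Hz0M]; [|exfalso; exact (Hz0 (Sx' z0 Hz0M))].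
  assert (HrP : In r P) by apply Hr.
  assert (PC : preserves C (Om r)) by exact (R_pres_Om _ _ HrP C_R).
  set (X' := fun z => inv C (x' (C z))).
  assert (RX' : R X').
  { exact (R_comp _ _ (R_inv _ C_R) (R_comp _ _ Rx' C_R)). }
  set (t := restr (Om r) X').
  assert (Ht : Rist G (Om r) t).
  { split; [apply R_G, R_restr; [apply saturated_Om, HrP | exact RX'] | apply restr_supp]. }
  assert (Hnt : ~ is_id t).
  { intros Hid. apply Hz0. specialize (Hid (inv C z0)). unfold t, X' in Hid.
    rewrite restr_in in Hid by (apply (preserves_inv C _ C_bij PC); exact Hrz0).
    rewrite (permKV C C_bij) in Hid. exact (perm_inj _ (bij_inv C C_bij) _ _ Hid). }
  destruct (exists_noncommuting c0 r t hc0 Hr Ht Hnt) as [y [[x Gd] [Hy Hyc]]].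
  assert (By := R_bij y (proj1 (proj2 Gd))).
  exists r. split; [exact Hr|]. exists (commp x' (conjp C y)). split; [|split].
  - rewrite <- (commp_conj_C_s x' y' x y Gd' Hy' Gd).
    apply commp_subgroup; [exact hHk | exact Hj' |].
    apply (H_conj_C_s (fun z => x (conjp s y z))), Gd.
  - apply Rist_commp; [exact hG | apply R_G, Rx' | exact (R_pres_Om _ _ HrP Rx') |].
    apply Rist_conjp_C; assumption.
  - intros Hid. apply Hyc.
    apply restr_commute; [exact By | exact (proj2 Hy) | exact (R_pres_Om _ _ HrP RX') |].
    apply commute_conjp; [exact C_bij|].
    apply commp_id_commute; [exact Bx' | apply bij_conjp; [exact C_bij | exact By] | exact Hid].
Qed.

Lemma exists_n0 : exists r, Mset P Om s r /\ exists n0, H k n0 /\ Rist G (Om r) n0 /\ ~ is_id n0.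
Proof.
  destruct (hNT s hs) as [a0 [Ha0 Hna0]].
  destruct (exists_noncommuting c0 s a0 hc0 Mset_self Ha0 Hna0) as [y' [[x' Gd'] [Hy' Hy'c]]].
  destruct (classic (is_id x')) as [Hx'|Hx'].
  - exists s. split; [exact Mset_self|]. apply (n0_of_trivial_fst x' y'); auto.
    intro Hid. apply Hy'c. intro z. rewrite !Hid. reflexivity.
  - apply not_all_ex_not in Hx'. destruct Hx' as [z0 Hz0]. exact (n0_of_moving_fst x' y' z0 Gd' Hy' Hz0).
Qed.

End Commutator.

(** * The normal closure of that element under [D] *)

Definition good_elt j := exists x y, good x y /\ j = (fun z => x (conjp s y z)).

Lemma good_elt_H j : good_elt j -> H k j.
Proof. intros [x [y [[_ [_ [_ [_ Hxy]]]] ->]]]. exact Hxy. Qed.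

Lemma good_elt_preserves r j : Mset P Om s r -> good_elt j -> bijective_perm j /\ preserves j (Om r).
Proof.
  intros Hr [x [y [Gd ->]]]. destruct (good_bij x y Gd) as [Bx By]. destruct Gd as [Rx [_ [_ [Sy _]]]].
  split; [apply bij_comp; [exact Bx | apply bij_conjp; assumption]|].
  apply preserves_comp; [exact (R_pres_Om _ _ (proj1 Hr) Rx)|].
  apply (preserves_disj _ (fun z => U_M (inv s z))); [apply bij_conjp; assumption | apply supp_conjp; assumption |].
  intros z HM Hrz. apply (U_M_sinv_out z); [exists r; auto | apply U_M_U, HM].
Qed.

Lemma D_restr_good_elt r d : Mset P Om s r -> D d ->
  exists j, good_elt j /\ restr (Om r) j = restr (Om r) d.
Proof.
  intros Hr Hd. destruct (D_good_fst d Hd) as [y Gd].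
  exists (fun z => restr U_M d (conjp s y z)). split; [exists (restr U_M d), y; auto|].
  rewrite <- (restr_restr (Om r) U_M d) by (intros z Hz; exists r; auto).
  apply functional_extensionality; intro z. destruct (classic (Om r z)) as [Hz|Hz].
  - assert (Fix : conjp s y z = z).
    { destruct Gd as [_ [_ [_ [Sy _]]]]. unfold conjp. rewrite Sy; [apply permKV, hsb|].
      intros HM. apply (U_M_sinv_out z); [exists r; auto | apply U_M_U, HM]. }
    rewrite !(restr_in (Om r) _ z Hz), Fix. reflexivity.
  - rewrite !(restr_out (Om r) _ z Hz). reflexivity.
Qed.

Lemma conjp_D_n0 r n0 d l : In r P -> Rist G (Om r) n0 -> D d ->
  bijective_perm l -> preserves l (Om r) -> restr (Om r) l = restr (Om r) d -> conjp d n0 = conjp l n0.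
Proof.
  intros Hr [Gn0 Sn0] Hd Bl Pl E. assert (Bn0 : bijective_perm n0) by (apply (subgroup_bij G); auto).
  assert (Rd := D_R d Hd).
  assert (Pd : preserves d (Om r)) by exact (R_pres_Om _ _ Hr Rd).
  rewrite (conjp_restr d n0 (Om r) (R_bij d Rd) Pd Sn0 Bn0), (conjp_restr l n0 (Om r) Bl Pl Sn0 Bn0).
  rewrite E. reflexivity.
Qed.

Lemma normal_closure_H_Rist r n0 : Mset P Om s r -> H k n0 -> Rist G (Om r) n0 ->
  subset (normal_closure D n0) (fun f => H k f /\ Rist G (Om r) f).
Proof.
  intros Hr Hn0 An0. assert (HrP : In r P) by apply Hr.
  apply gen_min; [apply subgroupI; [exact hHk | apply Rist_subgroup, hG]|].
  intros f [d [Hd ->]]. assert (Rd := D_R d Hd). split.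
  - destruct (D_restr_good_elt r d Hr Hd) as [j [Hj E]].
    destruct (good_elt_preserves r j Hr Hj) as [Bj Pj].
    rewrite (conjp_D_n0 r n0 d j HrP An0 Hd Bj Pj E).
    apply subgroup_conjp; [exact hHk | apply good_elt_H, Hj | exact Hn0].
  - apply Rist_conjp; [exact hG | apply R_G, Rd | exact (R_pres_Om _ _ HrP Rd) | exact An0].
Qed.

(* Schreier's lemma makes the restrictions of D to Om_r finitely generated; each generator is
   then realised by an element of H_k of the form x s y s^-1. *)
Lemma good_elt_lift r : Mset P Om s r -> fin_gen (Rist G (Om r)) ->
  exists Xl, (forall j, In j Xl -> good_elt j) /\
    forall d, D d -> exists l, gen (fun f => In f Xl) l /\ restr (Om r) l = restr (Om r) d.
Proof.
  intros Hr Hfg. assert (HrP : In r P) by apply Hr.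
  assert (Kr_Rist : subset (restr_D r) (Rist G (Om r))).
  { intros f [d [Hd ->]]. split; [|apply restr_supp].
    apply R_G, R_restr; [apply saturated_Om, HrP | apply D_R, Hd]. }
  destruct (schreier_fin_gen (Rist G (Om r)) (restr_D r) m) as [ks Hks];
    [apply Rist_subgroup, hG | apply restr_D_subgroup, HrP | exact Kr_Rist | exact Hfg |
     apply Rist_covered_by_restr_D, HrP |].
  destruct (list_choice ks (fun kk j => restr (Om r) j = kk) good_elt) as [Xl [HXl HXks]].
  { intros kk Hkk. destruct (proj2 (Hks kk) (gen_incl _ _ Hkk)) as [d [Hd ->]].
    destruct (D_restr_good_elt r d Hr Hd) as [j [Hj E]]. exists j. auto. }
  exists Xl. split; [exact HXl|]. intros d Hd.
  set (GX := gen (fun f => In f Xl)).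
  assert (GX_pres : forall l, GX l -> bijective_perm l /\ preserves l (Om r)).
  { apply gen_min; [apply preserving_subgroup|]. intros j Hj. apply (good_elt_preserves r j Hr), HXl, Hj. }
  assert (HImg : is_subgroup (fun f => exists l, GX l /\ f = restr (Om r) l)).
  { apply restr_image_subgroup; [|intros l Hl; apply (GX_pres l Hl)].
    apply gen_subgroup. intros j Hj. apply (good_elt_preserves r j Hr), HXl, Hj. }
  assert (Hks_img : subset (fun g => In g ks) (fun f => exists l, GX l /\ f = restr (Om r) l)).
  { intros kk Hkk. destruct (HXks kk Hkk) as [j [Hj E]]. exists j. split; [apply gen_incl, Hj | auto]. }
  assert (Kd : restr_D r (restr (Om r) d)) by (exists d; auto).
  apply Hks in Kd. destruct (gen_min _ _ HImg Hks_img _ Kd) as [l [Hl E]].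
  exists l. auto.
Qed.

Lemma normal_closure_in_fin_gen r n0 : Mset P Om s r -> H k n0 -> Rist G (Om r) n0 ->
  fin_gen (Rist G (Om r)) ->
  exists L, is_subgroup L /\ fin_gen L /\ subset L (H k) /\ subset (normal_closure D n0) L.
Proof.
  intros Hr Hn0 An0 Hfg. assert (HrP : In r P) by apply Hr.
  assert (Bn0 : bijective_perm n0) by (apply (subgroup_bij G); [exact hG | apply An0]).
  destruct (good_elt_lift r Hr Hfg) as [Xl [HXl Hlift]].
  set (L := gen (fun f => In f (n0 :: Xl))).
  assert (HL : is_subgroup L).
  { apply gen_subgroup. intros f [<-|Hf]; [exact Bn0|]. apply (good_elt_preserves r f Hr), HXl, Hf. }
  exists L. split; [exact HL|]. split; [exists (n0 :: Xl); reflexivity|]. split.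
  - apply gen_min; [exact hHk|]. intros f [<-|Hf]; [exact Hn0 | apply good_elt_H, HXl, Hf].
  - apply gen_min; [exact HL|]. intros f [d [Hd ->]].
    destruct (Hlift d Hd) as [l [Hl E]].
    assert (Pl : bijective_perm l /\ preserves l (Om r)).
    { apply (gen_min (fun f => In f Xl) _ (preserving_subgroup (Om r))); [|exact Hl].
      intros j Hj. apply (good_elt_preserves r j Hr), HXl, Hj. }
    rewrite (conjp_D_n0 r n0 d l HrP An0 Hd (proj1 Pl) (proj2 Pl) E).
    apply subgroup_conjp; [exact HL | | apply gen_incl; left; reflexivity].
    apply (gen_min (fun f => In f Xl) L HL); [|exact Hl]. intros j Hj. apply gen_incl. right. exact Hj.
Qed.

Lemma main_result : exists r, Mset P Om s r /\
    exists N, is_subgroup N /\ nontrivial_group N /\ subset N (H k) /\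
      subset N (Rist G (Om r)) /\ normalized_by N D /\
      ((forall r', Mset P Om s r' -> fin_gen (Rist G (Om r'))) ->
       exists L, is_subgroup L /\ fin_gen L /\ subset L (H k) /\ subset N L).
Proof.
  destruct Y_nonempty as [c0 Yc0].
  destruct (exists_n0 c0 Yc0) as [r [Hr [n0 [Hn0 [An0 NTn0]]]]].
  assert (Bn0 : bijective_perm n0) by (apply (subgroup_bij G); [exact hG | apply An0]).
  pose proof (normal_closure_H_Rist r n0 Hr Hn0 An0) as HN.
  exists r. split; [exact Hr|]. exists (normal_closure D n0).
  split; [apply normal_closure_subgroup; [exact D_subgroup | exact Bn0]|].
  split; [apply normal_closure_nontrivial; [exact D_subgroup | exact NTn0]|].
  split; [intros f Hf; apply (HN f Hf)|].
  split; [intros f Hf; apply (HN f Hf)|].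
  split; [apply normal_closure_normalized; [exact D_subgroup | exact Bn0]|].
  intros Hfg. exact (normal_closure_in_fin_gen r n0 Hr Hn0 An0 (Hfg r Hr)).
Qed.

End Configuration.

Theorem proposition3p18 (Omega : Type) (n : nat) (H : nat -> pset Omega)
  (G : pset Omega) (P : list (perm_t Omega)) (Om : perm_t Omega -> Omega -> Prop) :
  1 <= n ->
  (forall i, 1 <= i <= n -> is_subgroup (H i)) ->
  is_subgroup G ->
  confined n H G ->
  confining_subset n H G P ->
  NoDup P ->
  displacement_configuration P Om ->
  (forall s, In s P -> nontrivial_group (Rist G (Om s))) ->
  (forall s, In s P -> FC_trivial (Rist G (Om s)) (n * length P)) ->
  forall s k, In s P -> 1 <= k <= n ->
  index_le (Dset G P Om H s k) (R_gen G P Om) (n * length P) ->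
  exists r, Mset P Om s r /\
    exists N, is_subgroup N /\ nontrivial_group N /\ subset N (H k) /\
      subset N (Rist G (Om r)) /\ normalized_by N (Dset G P Om H s k) /\
      ((forall r', Mset P Om s r' -> fin_gen (Rist G (Om r'))) ->
       exists L, is_subgroup L /\ fin_gen L /\ subset L (H k) /\ subset N L).
Proof.
  intros _ HH HG _ [HP _] _ HDC HNT HFC s k Hs Hk Hidx.
  apply (main_result H G P Om s k (n * length P)); auto.
  apply HP, Hs.
Qed.
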